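(* Let $n\ge 2$, $\rho>0$, and let $F$ be a continuous distribution supported on the non-negative real numbers with a monotone decreasing density $f$. Then the worst-case zero-outage capacity $\underline{R^{0}}(\rho)=\log_2(1-\rho\,\phi_{-}(1))$ equals $0$.
   Context: Let $X\sim F$, $G=F^{-1}$. The function $\phi_{-}$ is defined for the distribution of $-X$, which has the increasing density $x\mapsto f(-x)$ and quantile function $G_{-}(x)=-G(1-x)$: for $a\in[0,1]$ let $H^{-}_a(x)=G_{-}(a+x)+(n-1)G_{-}(1-(n-1)x)$, $c^{-}_n(a)=\min\{c\in[0,\tfrac{1-a}{n}]: \int_c^{(1-a)/n}H^{-}_a(t)\,dt\le(\tfrac{1-a}{n}-c)H^{-}_a(c)\}$, and $\phi_{-}(a)=H^{-}_a(0)=-(G(1-a)+(n-1)G(0))$ if $c^{-}_n(a)>0$, $\phi_{-}(a)=n\,\mathbb{E}[-X\mid -X>G_{-}(a)]=-n\,\mathbb{E}[X\mid X<G(1-a)]$ if $c^{-}_n(a)=0$. The quantity $\log_2(1-\rho\phi_{-}(1-\varepsilon))$ is the smallest $\varepsilon$-outage capacity $\sup\{R\ge0:\Pr(\sum_{i=1}^n|h_i|^2<(2^R-1)/\rho)<\varepsilon\}$ over joint distributions of $(|h_1|^2,\dots,|h_n|^2)$ with each $|h_i|^2\sim F$; zero outage is $\varepsilon=0$. *)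

From HB Require Import structures.
From mathcomp Require Import all_boot all_order all_algebra.
From mathcomp Require Import all_classical all_reals all_analysis.
Set Implicit Arguments. Unset Strict Implicit. Unset Printing Implicit Defensive.
Import Order.TTheory GRing.Theory Num.Theory.
Local Open Scope classical_set_scope.
Local Open Scope ring_scope.

Definition decreasing_density (R : realType) (f : R -> R) : Prop :=
  [/\ (forall x, 0 <= f x),
      measurable_fun setT f,
      (\int[lebesgue_measure]_(y in setT) (f y)%:E = 1)%E,
      (forall x, x < 0 -> f x = 0)
    & {in `[0, +oo[ &, {homo f : x y /~ x <= y}}].

Definition cdf_of (R : realType) (f : R -> R) (x : R) : \bar R :=
  (\int[lebesgue_measure]_(y in `]-oo, x]) (f y)%:E)%E.

(* Zero-outage capacity of a given joint law of (|h_1|^2, ..., |h_n|^2),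
   realised as random variables X i on a probability space (T, P):
   sup { R >= 0 : Pr( sum_i X_i < (2^R - 1)/rho ) = 0 }. *)
Definition zero_outage_capacity (R : realType) (d : measure_display)
    (T : measurableType d) (P : probability T R) (n : nat)
    (X : 'I_n -> T -> R) (rho : R) : \bar R :=
  ereal_sup [set r%:E | r in
    [set r : R | 0 <= r /\
       P [set w | \sum_(i < n) X i w < (2 `^ r - 1) / rho] = 0%E]].

Definition worst_case_zero_outage (R : realType) (n : nat) (f : R -> R)
    (rho : R) : \bar R :=
  ereal_inf [set c | exists (d : measure_display) (T : measurableType d)
      (P : probability T R) (X : 'I_n -> T -> R),
      [/\ (forall i, measurable_fun setT (X i)),
          (forall i x, P (X i @^-1` `]-oo, x]) = cdf_of f x)
        & c = zero_outage_capacity P X rho]].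

From HB Require Import structures.
From mathcomp Require Import all_boot all_order all_algebra.
From mathcomp Require Import all_classical all_reals all_analysis.
From mathcomp Require Import measurable_realfun lra.
Set Implicit Arguments. Unset Strict Implicit. Unset Printing Implicit Defensive.
Import Order.TTheory GRing.Theory Num.Theory.
Local Open Scope ring_scope.
Local Open Scope classical_set_scope.

(* Every marginal F lives on [0, +oo), so under any coupling the sum of the
   gains is almost surely nonnegative and the rate 0 never outages: the
   capacity is >= 0.  Conversely, under the comonotone coupling in which all
   n gains equal a single X ~ F, a rate r > 0 outages with probability
   P(X < (2^r - 1) / (n rho)) > 0, because a nonincreasing density on
   [0, +oo) charges every interval [0, t): either f(t/2) > 0, or f vanishes
   beyond t/2 and all the mass lies below t. *)

Definition probability_density (R : realType) (f : R -> R) : Prop :=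
  [/\ (forall x, 0 <= f x), measurable_fun setT f
    & (\int[lebesgue_measure]_(y in setT) (f y)%:E = 1)%E].

Lemma decreasing_density_pdf (R : realType) (f : R -> R) :
  decreasing_density f -> probability_density f.
Proof. by case=> f_ge0 mf f1 _ _; split. Qed.

(* The proof argument is unused in the body; it is there so that the measure
   and probability instances below can be declared on [density_prob pf]. *)
Definition density_prob (R : realType) (f : R -> R)
    (_ : probability_density f) (A : set R) : \bar R :=
  (\int[lebesgue_measure]_(x in A) (f x)%:E)%E.

Section density_probability.
Context (R : realType) (f : R -> R) (pf : probability_density f).
Local Notation P := (density_prob pf).

Let f_ge0 x : 0 <= f x. Proof. by case: pf. Qed.

Let mf : measurable_fun setT f. Proof. by case: pf. Qed.

Let P0 : P set0 = 0%E. Proof. exact: integral_set0. Qed.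

Let P_ge0 A : (0 <= P A)%E.
Proof. by apply: integral_ge0 => x _; rewrite lee_fin. Qed.

Let P_sigma_additive : semi_sigma_additive P.
Proof.
move=> /= A mA tA mUA; rewrite /density_prob ge0_integral_bigcup//=.
- apply: is_cvg_ereal_nneg_natsum_cond => k _ _.
  by apply: integral_ge0 => x _; rewrite lee_fin.
- by apply/measurable_EFinP; exact: measurable_funTS.
- by move=> x _; rewrite lee_fin.
Qed.

HB.instance Definition _ := isMeasure.Build _ _ _ P P0 P_ge0 P_sigma_additive.

Let P_setT : P [set: R] = 1%E. Proof. by case: pf. Qed.

HB.instance Definition _ := @Measure_isProbability.Build _ _ R P P_setT.

End density_probability.

Lemma powR_gt1 (R : realType) (a x : R) : 1 < a -> 0 < x -> 1 < a `^ x.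
Proof.
move=> a1 x0; have a0 : 0 < a := lt_trans ltr01 a1.
by rewrite /powR gt_eqF // expR_gt1 mulr_gt0 // ln_gt0.
Qed.

Lemma set_sumr_const_lt (R : realType) (n : nat) (c : R) : (0 < n)%N ->
  [set w : R | \sum_(i < n) w < c] = `]-oo, c / n%:R[.
Proof.
move=> n0; apply/seteqP; split => w /=;
  by rewrite in_itv /= sumr_const card_ord ltr_pdivlMr ?ltr0n // mulr_natr.
Qed.

Section decreasing_density.
Context (R : realType) (f : R -> R) (hf : decreasing_density f).

Lemma decreasing_density_eq0 (s y : R) : 0 < s -> f s <= 0 -> s <= y -> f y = 0.
Proof.
case: hf => f_ge0 _ _ _ f_dec s0 fs0 sy.
apply/eqP; rewrite eq_le f_ge0 andbT (le_trans _ fs0) //.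
by apply: f_dec; rewrite // in_itv /= andbT ?(le_trans (ltW s0) sy) ?ltW.
Qed.

Lemma density_prob_itvNyo_gt0 (t : R) : 0 < t ->
  (0 < density_prob (decreasing_density_pdf hf) `]-oo, t[)%E.
Proof.
move=> t0; have [f_ge0 mf f1 _ f_dec] := hf.
have mfE A : measurable_fun A (EFin \o f).
  by apply/measurable_EFinP; exact: measurable_funTS.
set s := t / 2; have s0 : 0 < s by rewrite divr_gt0.
have s_ge0 := ltW s0.
have [fs_gt0|fs_le0] := ltrP 0 (f s).
  rewrite /density_prob.
  apply: (@lt_le_trans _ _ (\int[lebesgue_measure]_(x in `[0%R, s]) (f s)%:E)%E).
    rewrite integral_cst //= lebesgue_measure_itv /= lte_fin s0 sube0.
    by rewrite -EFinM lte_fin mulr_gt0.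
  apply: (@le_trans _ _ (\int[lebesgue_measure]_(x in `[0%R, s]) (f x)%:E)%E).
    apply: ge0_le_integral => //=;
      [by move=> x _; rewrite lee_fin ltW|exact: mfE|].
    move=> x; rewrite in_itv /= => /andP[x0 xs]; rewrite lee_fin.
    by apply: f_dec; rewrite // in_itv /= andbT.
  apply: ge0_subset_integral => //=;
    [exact: mfE|by move=> x _; rewrite lee_fin|].
  move=> x /=; rewrite !in_itv /= => /andP[_ xs].
  by rewrite (le_lt_trans xs) // /s; lra.
rewrite /density_prob integral_mkcond.
have -> : (fun x => (f x)%:E) \_ `]-oo, t[ = (fun x => (f x)%:E).
  apply/funext => x; rewrite /patch; case: ifPn => //.
  rewrite notin_setE /= in_itv /= => /negP; rewrite -leNgt => tx.
  by rewrite (decreasing_density_eq0 s0 fs_le0) // (le_trans _ tx) // /s; lra.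
by rewrite f1 lte01.
Qed.

End decreasing_density.

Lemma cdf_of_lt0 (R : realType) (f : R -> R) (x : R) :
  (forall y, y < 0 -> f y = 0) -> x < 0 -> cdf_of f x = 0%E.
Proof.
move=> f_lt0 x_lt0; apply: integral0_eq => y /=; rewrite in_itv /= => yx.
by rewrite f_lt0 // (le_lt_trans yx x_lt0).
Qed.

Section zero_outage_capacity_bounds.
Context (R : realType) (d : measure_display) (T : measurableType d).

Lemma negligible_lt0 (mu : {measure set T -> \bar R}) (Y : T -> R) :
  measurable_fun setT Y -> (forall x, x < 0 -> mu (Y @^-1` `]-oo, x]) = 0%E) ->
  mu.-negligible [set w | Y w < 0].
Proof.
move=> mY Y_ge0.
apply: (@negligibleS _ _ _ _ (\bigcup_k Y @^-1` `]-oo, - k.+1%:R^-1])).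
  move=> w /= /ltr_add_invr[k Yk]; exists k => //=.
  by rewrite in_itv /= ltW // -(ltrD2r k.+1%:R^-1) addNr.
apply: negligible_bigcup => k; apply/negligibleP.
  by rewrite -[X in measurable X]setTI; apply: mY.
by apply: Y_ge0; rewrite oppr_lt0 invr_gt0.
Qed.

Lemma negligible_sum_lt0 (mu : {measure set T -> \bar R}) (n : nat)
    (X : 'I_n -> T -> R) :
  (forall i, mu.-negligible [set w | X i w < 0]) ->
  mu.-negligible [set w | \sum_(i < n) X i w < 0].
Proof.
move=> X_ge0.
apply: (@negligibleS _ _ _ _ (\big[setU/set0]_(i < n) [set w | X i w < 0])).
  move=> w /= sum_lt0; rewrite -bigcup_seq.
  have /existsP[i Xi] : [exists i, X i w < 0].
    apply: contraLR sum_lt0; rewrite negb_exists => /forallP Xw_ge0.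
    by rewrite -leNgt sumr_ge0 // => i _; rewrite leNgt Xw_ge0.
  by exists i => //; exact: mem_index_enum.
elim/big_ind: _ => [|A B|i _];
  [exact: negligible_set0|exact: negligibleU|exact: X_ge0].
Qed.

Context (P : probability T R) (n : nat) (X : 'I_n -> T -> R) (rho : R).

Lemma zero_outage_capacity_ge0 :
  (forall i, measurable_fun setT (X i)) ->
  (forall i, P.-negligible [set w | X i w < 0]) ->
  (0 <= zero_outage_capacity P X rho)%E.
Proof.
move=> mX X_ge0; apply: ereal_sup_ubound; exists 0 => //; split => //.
rewrite powRr0 subrr mul0r; apply/negligibleP; last exact: negligible_sum_lt0.
have := measurable_sum (index_enum 'I_n) mX measurableT
  (measurable_itv `]-oo, 0[%R).
by rewrite setTI.
Qed.

Lemma zero_outage_capacity_le0 : 0 < rho ->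
  (forall c, 0 < c -> P [set w | \sum_(i < n) X i w < c] != 0%E) ->
  (zero_outage_capacity P X rho <= 0)%E.
Proof.
move=> rho0 P_gt0; apply: ge_ereal_sup => _ [r [r_ge0 Pr0] <-].
rewrite lee_fin leNgt; apply/negP => r_gt0.
suff c_gt0 : 0 < (2 `^ r - 1) / rho by move: (P_gt0 _ c_gt0); rewrite Pr0 eqxx.
by rewrite divr_gt0 // subr_gt0 powR_gt1 // ltr1n.
Qed.

End zero_outage_capacity_bounds.

Theorem proposition2 (R : realType) (n : nat) (rho : R) (f : R -> R) :
  (2 <= n)%N -> 0 < rho -> decreasing_density f ->
  worst_case_zero_outage n f rho = 0%E.
Proof.
move=> n2 rho0 hf; have [_ _ _ f_lt0 _] := hf; have n0 := ltnW n2.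
set P := density_prob (decreasing_density_pdf hf).
apply/eqP; rewrite eq_le; apply/andP; split.
- apply: ge_ereal_inf; exists (zero_outage_capacity P (fun _ : 'I_n => id) rho).
    by exists _, R, P, (fun _ => id).
  apply: zero_outage_capacity_le0 => // c c0.
  rewrite set_sumr_const_lt // gt_eqF // density_prob_itvNyo_gt0 //.
  by rewrite divr_gt0 // ltr0n.
- apply: le_ereal_inf_tmp => _ [d [T [Q [X [mX QX ->]]]]].
  apply: zero_outage_capacity_ge0 => // i; apply: negligible_lt0 => // x x0.
  exact: etrans (QX i x) (cdf_of_lt0 f_lt0 x0).
Qed.
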